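(* For all $x,y\in\mathbb{B}^2$ with $x\neq y$, the lower bound for $\tilde\tau_{\mathbb{B}^2}(x,y)$ in the following piecewise form, $$L(x,y)=\begin{cases}\log\Big(1+2\sqrt{\frac{|x-y|\sqrt{|x+y|^2+|x-y|^2}}{4-|x+y|^2-|x-y|^2}}\Big), & \text{if } |x+y|\Big(1+\frac{4}{|x+y|^2+|x-y|^2}\Big)\le4,\\[2mm] \log\Big(1+\frac{2|x-y|}{\sqrt{(2-|x+y|)^2+|x-y|^2}}\Big), & \text{otherwise},\end{cases}$$ satisfies $$L(x,y)\ge\log\Big(1+\frac{2|x-y|}{\sqrt{4-|x-y|^2}}\Big).$$
   Context: $\mathbb{B}^2$ is the open unit disk in $\mathbb{R}^2$; $|\cdot|$ is the Euclidean norm. *)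

From Stdlib Require Import Reals Lra.
Open Scope R_scope.

Definition pt : Type := (R * R)%type.

Definition enorm (p : pt) : R := sqrt (fst p ^ 2 + snd p ^ 2).

Definition padd (p q : pt) : pt := (fst p + fst q, snd p + snd q).
Definition psub (p q : pt) : pt := (fst p - fst q, snd p - snd q).

Definition in_unit_disk (p : pt) : Prop := enorm p < 1.

Definition L_bound (x y : pt) : R :=
  let s := enorm (padd x y) in
  let d := enorm (psub x y) in
  if Rle_dec (s * (1 + 4 / (s ^ 2 + d ^ 2))) 4
  then ln (1 + 2 * sqrt (d * sqrt (s ^ 2 + d ^ 2) / (4 - s ^ 2 - d ^ 2)))
  else ln (1 + 2 * d / sqrt ((2 - s) ^ 2 + d ^ 2)).

(* Write s = |x+y| and d = |x-y|.  For x, y in the open unit disk with x <> y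
   the parallelogram law gives s^2 + d^2 = 2|x|^2 + 2|y|^2 < 4, and d > 0.
   Since log(1 + .) is increasing, it suffices to compare the arguments:
   - first branch: as d <= sqrt(s^2+d^2) and 4 - s^2 - d^2 <= 4 - d^2,
       d^2/(4-d^2) <= d sqrt(s^2+d^2)/(4-s^2-d^2),
     and 2d/sqrt(4-d^2) = 2 sqrt(d^2/(4-d^2));
   - second branch: the failure of s(1 + 4/(s^2+d^2)) <= 4 forces
       (2-s)^2 + d^2 <= 4 - d^2,
     so the denominator sqrt((2-s)^2+d^2) is at most sqrt(4-d^2). *)

From Stdlib Require Import Reals Lra Psatz.
Open Scope R_scope.

Lemma enorm_sq (p : pt) : enorm p ^ 2 = fst p ^ 2 + snd p ^ 2.
Proof.
  unfold enorm; apply pow2_sqrt.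
  pose proof (pow2_ge_0 (fst p)); pose proof (pow2_ge_0 (snd p)); lra.
Qed.

Lemma parallelogram (x y : pt) :
  enorm (padd x y) ^ 2 + enorm (psub x y) ^ 2 = 2 * enorm x ^ 2 + 2 * enorm y ^ 2.
Proof. rewrite !enorm_sq; unfold padd, psub; simpl; ring. Qed.

Lemma pow2_pos (r : R) : r <> 0 -> 0 < r ^ 2.
Proof. intro Hr; pose proof (Rsqr_pos_lt r Hr); unfold Rsqr in *; simpl; lra. Qed.

Lemma enorm_psub_pos (x y : pt) : x <> y -> 0 < enorm (psub x y).
Proof.
  destruct x as [a b], y as [c e]; intro Hne.
  apply sqrt_lt_R0; unfold psub; simpl.
  destruct (Req_dec a c) as [-> | Hac].
  - assert (Hbe : b - e <> 0) by (intro; apply Hne; f_equal; lra).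
    pose proof (pow2_pos _ Hbe); nra.
  - assert (Hac' : a - c <> 0) by lra.
    pose proof (pow2_pos _ Hac'); pose proof (pow2_ge_0 (b - e)); lra.
Qed.

Lemma disk_sum_diff_lt4 (x y : pt) :
  in_unit_disk x -> in_unit_disk y ->
  enorm (padd x y) ^ 2 + enorm (psub x y) ^ 2 < 4.
Proof.
  unfold in_unit_disk; intros Hx Hy.
  assert (Hx0 : 0 <= enorm x) by apply sqrt_pos.
  assert (Hy0 : 0 <= enorm y) by apply sqrt_pos.
  rewrite parallelogram; nra.
Qed.

Lemma ln_1plus_le (u v : R) : 0 <= u -> u <= v -> ln (1 + u) <= ln (1 + v).
Proof.
  intros Hu Huv; destruct (Rle_lt_or_eq_dec _ _ Huv) as [Hlt | ->].
  - left; apply ln_increasing; lra.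
  - lra.
Qed.

Section Comparisons.

Variables s d : R.
Hypothesis s_nonneg : 0 <= s.
Hypothesis d_pos : 0 < d.
Hypothesis sum_lt4 : s ^ 2 + d ^ 2 < 4.

Lemma rhs_arg_pos : 0 < 2 * d / sqrt (4 - d ^ 2).
Proof.
  apply Rdiv_lt_0_compat; [lra |].
  apply sqrt_lt_R0; pose proof (pow2_ge_0 s); lra.
Qed.

Lemma first_branch_dominates :
  2 * d / sqrt (4 - d ^ 2) <= 2 * sqrt (d * sqrt (s ^ 2 + d ^ 2) / (4 - s ^ 2 - d ^ 2)).
Proof.
  pose proof (pow2_ge_0 s) as Hs2.
  assert (Hrewrite : 2 * d / sqrt (4 - d ^ 2) = 2 * sqrt (d ^ 2 / (4 - d ^ 2))).
  { rewrite sqrt_div_alt by lra; rewrite sqrt_pow2 by lra; field.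
    apply Rgt_not_eq, sqrt_lt_R0; lra. }
  rewrite Hrewrite; apply Rmult_le_compat_l; [lra |]; apply sqrt_le_1_alt.
  assert (Hd_le : d <= sqrt (s ^ 2 + d ^ 2)).
  { apply Rle_trans with (sqrt (d ^ 2)); [rewrite sqrt_pow2; lra |].
    apply sqrt_le_1_alt; lra. }
  unfold Rdiv; apply Rmult_le_compat.
  - pose proof (pow2_ge_0 d); lra.
  - left; apply Rinv_0_lt_compat; lra.
  - nra.
  - apply Rinv_le_contravar; lra.
Qed.

Lemma second_branch_condition :
  ~ s * (1 + 4 / (s ^ 2 + d ^ 2)) <= 4 -> (2 - s) ^ 2 + d ^ 2 <= 4 - d ^ 2.
Proof.
  intro Hcond.
  pose proof (pow_lt d 2 d_pos) as Hd2.
  assert (Ht : 0 < s ^ 2 + d ^ 2) by (pose proof (pow2_ge_0 s); lra).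
  assert (Hcross : s * (s ^ 2 + d ^ 2 + 4) > 4 * (s ^ 2 + d ^ 2)).
  { replace (s * (s ^ 2 + d ^ 2 + 4))
      with (s * (1 + 4 / (s ^ 2 + d ^ 2)) * (s ^ 2 + d ^ 2)) by (field; lra).
    apply Rnot_le_gt in Hcond; nra. }
  assert (Hs_lt2 : s < 2) by nra.
  assert (Hbound : 2 * (s ^ 2 + d ^ 2) <= s ^ 2 + 4 * s).
  { apply (Rmult_le_reg_r (4 - s)); nra. }
  nra.
Qed.

Lemma second_branch_dominates :
  ~ s * (1 + 4 / (s ^ 2 + d ^ 2)) <= 4 ->
  2 * d / sqrt (4 - d ^ 2) <= 2 * d / sqrt ((2 - s) ^ 2 + d ^ 2).
Proof.
  intro Hcond; apply second_branch_condition in Hcond.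
  assert (Hden : 0 < sqrt ((2 - s) ^ 2 + d ^ 2)).
  { apply sqrt_lt_R0; pose proof (pow2_ge_0 (2 - s)); pose proof (pow_lt d 2 d_pos); nra. }
  unfold Rdiv; apply Rmult_le_compat_l; [lra |].
  apply Rinv_le_contravar; [exact Hden | apply sqrt_le_1_alt; exact Hcond].
Qed.

End Comparisons.

Theorem mainTheorem7 (x y : pt) :
  in_unit_disk x -> in_unit_disk y -> x <> y ->
  L_bound x y >= ln (1 + 2 * enorm (psub x y) / sqrt (4 - enorm (psub x y) ^ 2)).
Proof.
  intros Hx Hy Hne.
  pose proof (disk_sum_diff_lt4 x y Hx Hy) as Hlt4.
  pose proof (enorm_psub_pos x y Hne) as Hd.
  assert (Hs : 0 <= enorm (padd x y)) by apply sqrt_pos.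
  unfold L_bound; cbv zeta.
  set (s := enorm (padd x y)) in *; set (d := enorm (psub x y)) in *.
  assert (Hrhs : 0 < 2 * d / sqrt (4 - d ^ 2)) by (apply (rhs_arg_pos s d); assumption).
  apply Rle_ge; destruct Rle_dec as [Hfirst | Hsecond].
  - apply ln_1plus_le; [lra | apply (first_branch_dominates s d); assumption].
  - apply ln_1plus_le; [lra | apply (second_branch_dominates s d); assumption].
Qed.
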